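(* Fix $\beta>0$ and a transient MDP with a sink state as in the context. There exists $\pi^\star\in\Pi_{\mathrm{SD}}$ such that $\bm v^{\infty,\star}=\bm v^{\infty}(\pi^\star)$ and \[ g^\star_\infty(\beta)=\mathrm{ERM}^{\bm\mu}_\beta\big[v^{\infty,\star}_{\tilde s_0}\big]=\max_{\pi\in\Pi_{\mathrm{SD}}}\mathrm{ERM}^{\bm\mu}_\beta\big[v^{\infty}_{\tilde s_0}(\pi)\big], \] where $\tilde s_0\sim\mu$ (quantities may take the value $-\infty$).
   Context: MDP: states $\bar{\mathcal S}=\{1,\dots,S,S+1\}$, $e:=S+1$ a sink state, $\mathcal S=\{1,\dots,S\}$; finite actions $\mathcal A$; transitions $p(s,a,s')$, real rewards $r(s,a,s')$ of arbitrary sign; $p(e,a,e)=1$, $r(e,a,e)=0$; initial distribution $\mu$ on $\mathcal S$ (never starting at $e$) with $\mu>0$ componentwise. Policy classes: $\Pi_{\mathrm{HR}}$ (history-dependent randomized), $\Pi_{\mathrm{MD}}$ (Markov deterministic), $\Pi_{\mathrm{SD}}$ (stationary deterministic). Transience (standing assumption): for every $\pi\in\Pi_{\mathrm{SD}}$, $\sum_{t\ge0}\mathbb P^{\pi,s}[\tilde s_t=s']<\infty$ for all $s,s'\in\mathcal S$. $\mathrm{ERM}_\beta[\tilde x]=-\beta^{-1}\log\mathbb E[e^{-\beta\tilde x}]$. Define $v^t_s(\pi)=\mathrm{ERM}^{\pi,s}_\beta[\sum_{k=0}^{t-1}r(\tilde s_k,\tilde a_k,\tilde s_{k+1})]$,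 $v^{t,\star}_s=\max_{\pi\in\Pi_{\mathrm{MD}}}v^t_s(\pi)$, $\bm v^\infty(\pi)=\liminf_t\bm v^t(\pi)$, $\bm v^{\infty,\star}=\liminf_t\bm v^{t,\star}$. Define $g_t(\pi,\beta)=\mathrm{ERM}^{\pi,\mu}_\beta[\sum_{k=0}^{t}r(\tilde s_k,\tilde a_k,\tilde s_{k+1})]$ (initial state drawn from $\mu$), $g^\star_t(\beta)=\sup_{\pi\in\Pi_{\mathrm{HR}}}g_t(\pi,\beta)$, $g^\star_\infty(\beta)=\liminf_{t\to\infty}g^\star_t(\beta)$. For a vector $\bm v$, $\mathrm{ERM}^{\mu}_\beta[v_{\tilde s_0}]=-\beta^{-1}\log\sum_s\mu_s e^{-\beta v_s}$. *)

From HB Require Import structures.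
From mathcomp Require Import all_boot all_order all_algebra.
From mathcomp Require Import all_classical all_reals all_analysis.
Set Implicit Arguments.
Unset Strict Implicit.
Unset Printing Implicit Defensive.
Import Order.TTheory GRing.Theory Num.Theory.
Local Open Scope ring_scope.
Local Open Scope classical_set_scope.

(* States \bar S = {1,..,S,S+1} are encoded as 'I_S.+1 = {0,..,S};
   the sink state e = S+1 is encoded as ord_max (value S). *)
Definition state (S : nat) := 'I_S.+1.
Definition sink (S : nat) : state S := ord_max.

Section MDP.
Variables (R : realType) (S : nat) (A : finType).
Variables (p : state S -> A -> state S -> R) (r : state S -> A -> state S -> R).

(* History-dependent randomized policy: given the past history
   [(s_0,a_0);...;(s_{t-1},a_{t-1})] and the current state s_t,
   a distribution over actions. *)
Definition hr_policy := seq (state S * A) -> state S -> A -> R.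

Definition is_HR (pi : hr_policy) : Prop :=
  (forall h s a, 0 <= pi h s a) /\ (forall h s, \sum_(a : A) pi h s a = 1).

Definition md_policy (d : nat -> state S -> A) : hr_policy :=
  fun h s a => (a == d (size h) s)%:R.

Definition sd_policy (d : {ffun state S -> A}) : hr_policy :=
  fun h s a => (a == d s)%:R.

Definition hist T (x : {ffun 'I_T.+1 -> state S}) (a : {ffun 'I_T -> A})
  (k : 'I_T) : seq (state S * A) :=
  [seq (x (widen_ord (leqnSn T) i), a i) | i : 'I_T <- enum 'I_T & (val i < val k)%N].

Definition traj_prob (nu : state S -> R) (pi : hr_policy) (T : nat)
  (x : {ffun 'I_T.+1 -> state S}) (a : {ffun 'I_T -> A}) : R :=
  nu (x ord0) *
  \prod_(k < T) (pi (hist x a k) (x (widen_ord (leqnSn T) k)) (a k)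
                 * p (x (widen_ord (leqnSn T) k)) (a k) (x (lift ord0 k))).

Definition Exp (nu : state S -> R) (pi : hr_policy) (T : nat)
  (f : {ffun 'I_T.+1 -> state S} -> {ffun 'I_T -> A} -> R) : R :=
  \sum_(x : {ffun 'I_T.+1 -> state S}) \sum_(a : {ffun 'I_T -> A})
     traj_prob nu pi x a * f x a.

Definition ret T (x : {ffun 'I_T.+1 -> state S}) (a : {ffun 'I_T -> A}) : R :=
  \sum_(k < T) r (x (widen_ord (leqnSn T) k)) (a k) (x (lift ord0 k)).

Definition ERM_ret (beta : R) (nu : state S -> R) (pi : hr_policy) (T : nat) : R :=
  - beta^-1 * ln (Exp nu pi (T:=T) (fun x a => expR (- beta * ret x a))).

Definition dirac (s : state S) : state S -> R := fun s' => (s' == s)%:R.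

Definition v_t (beta : R) (t : nat) (pi : hr_policy) (s : state S) : R :=
  ERM_ret beta (dirac s) pi t.

Definition v_t_star (beta : R) (t : nat) (s : state S) : \bar R :=
  ereal_sup (range (fun d : nat -> state S -> A => (v_t beta t (md_policy d) s)%:E)).

Definition v_inf (beta : R) (pi : hr_policy) (s : state S) : \bar R :=
  limn_einf (fun t => (v_t beta t pi s)%:E).
Definition v_inf_star (beta : R) (s : state S) : \bar R :=
  limn_einf (fun t => v_t_star beta t s).

(* g_t(pi,beta): ERM of sum_{k=0}^{t} r(...), i.e. horizon t+1, s_0 ~ mu *)
Definition g_t (mu : state S -> R) (beta : R) (t : nat) (pi : hr_policy) : R :=
  ERM_ret beta mu pi t.+1.
Definition g_t_star (mu : state S -> R) (beta : R) (t : nat) : \bar R :=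
  ereal_sup [set (g_t mu beta t pi)%:E | pi in [set pi | is_HR pi]].
Definition g_inf_star (mu : state S -> R) (beta : R) : \bar R :=
  limn_einf (fun t => g_t_star mu beta t).

Definition ERM_mu (mu : state S -> R) (beta : R) (v : state S -> \bar R) : \bar R :=
  ((- beta^-1)%:E *
    lne (\sum_(s : state S | s != sink S) (mu s)%:E * expeR ((- beta)%:E * v s)))%E.

Definition transient : Prop :=
  forall (d : {ffun state S -> A}) (s s' : state S),
    s != sink S -> s' != sink S ->
    (\sum_(0 <= t <oo)
       (Exp (dirac s) (sd_policy d) (T:=t) (fun x _ => (x ord_max == s')%:R) : R)%:E
     < +oo)%E.

End MDP.

(* Writing w = E[exp (-beta X)] for the exponential moment of a return X, the
   ERM is cert_equiv beta w = -beta^-1 ln w, a decreasing function of w, so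
   maximising the ERM means minimising w.  For a finite horizon this is
   dynamic programming with T g s = min_a sum_y p(s,a,y) exp(-beta r(s,a,y)) g y:
   v^{t,*} and g^*_t are certainty equivalents of T^t 1, attained by a greedy
   Markov deterministic policy.
   Iterating T from the indicator z of the sink gives a nondecreasing minorant
   u_t <= T^t 1.  Where u_t is unbounded every value tends to -oo.  On the set F
   where it is bounded, its limit U admits a stationary d with T_d u_t <= U for
   all t, so F is closed under d and T_d U <= U on F.  Transience makes the sink
   reachable under d, hence a power T_d^m contracts the excess U - z on F and
   T_d^t 1 tends to U; squeezed between u_t and T_d^t 1, so does T^t 1.  Thus d
   is optimal from every state, the liminfs are limits, and g^*_oo is the ERM
   of the limit values. *)

From Pilot Require Import Defs.
From HB Require Import structures.
From mathcomp Require Import all_boot all_order all_algebra.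
From mathcomp Require Import all_classical all_reals all_analysis.
From mathcomp Require Import ring lra.
Import Order.TTheory GRing.Theory Num.Theory.
Import numFieldNormedType.Exports.
Local Open Scope ring_scope.
Local Open Scope classical_set_scope.

Set Implicit Arguments.
Unset Strict Implicit.
Unset Printing Implicit Defensive.

Lemma sum_delta (R : pzSemiRingType) (I : finType) (i0 : I) (F : I -> R) :
  \sum_i (i == i0)%:R * F i = F i0.
Proof. by rewrite (bigD1 i0) //= eqxx mul1r big1 ?addr0 // => i /negbTE ->; rewrite mul0r. Qed.

Lemma convex_comb_gt0 (R : numDomainType) (I : finType) (w G : I -> R) :
  (forall i, 0 <= w i) -> \sum_i w i = 1 -> (forall i, 0 < G i) ->
  0 < \sum_i w i * G i.
Proof.
move=> w_ge0 w_sum1 G_gt0.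
have wG_ge0 i : 0 <= w i * G i by rewrite mulr_ge0 // ltW.
rewrite lt_neqAle sumr_ge0 // andbT; apply/eqP => /esym sum0.
have wG0 := psumr_eq0P (fun i _ => wG_ge0 i) sum0.
move: w_sum1; rewrite big1 => [/eqP|i _]; first by rewrite eq_sym oner_eq0.
by have /eqP := wG0 i isT; rewrite mulf_eq0 (gt_eqF (G_gt0 i)) orbF => /eqP.
Qed.

Lemma le_limn_einf (R : realType) (u v : (\bar R)^nat) :
  (forall n, u n <= v n)%E -> (limn_einf u <= limn_einf v)%E.
Proof.
move=> uv; rewrite !limn_einf_lim; apply: lee_lim; [exact: is_cvg_einfs|exact: is_cvg_einfs|].
apply: nearW => n; apply: le_ereal_inf_tmp => _ [k nk <-]; apply: le_trans (uv k).
by apply: ereal_inf_lbound; exists k.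
Qed.

Section MonotoneIteration.
Variables (T : Type) (R : numDomainType).
Implicit Types (f : (T -> R) -> T -> R) (g : T -> R).

Definition monotone_op f :=
  forall g1 g2, (forall y, g1 y <= g2 y) -> forall s, f g1 s <= f g2 s.

Lemma iter_monotone f n : monotone_op f -> monotone_op (iter n f).
Proof. by move=> f_mono; elim: n => [|n IH] g1 g2 g12 s //=; apply: f_mono => y; apply: IH. Qed.

Lemma iter_le_iter f1 f2 n g s : monotone_op f2 -> (forall g s, f1 g s <= f2 g s) ->
  iter n f1 g s <= iter n f2 g s.
Proof.
move=> f2_mono f12; elim: n g s => [|n IH] g s //=.
by apply: le_trans (f12 _ _) _; apply: f2_mono.
Qed.

Lemma iter_ge0 f g n s : (forall g, (forall y, 0 <= g y) -> forall s, 0 <= f g s) ->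
  (forall y, 0 <= g y) -> 0 <= iter n f g s.
Proof. by move=> f_ge0 g_ge0; elim: n s => [|n IH] s //=; apply: f_ge0. Qed.

Lemma iter_fixed f e g n : (forall g, f g e = g e) -> iter n f g e = g e.
Proof. by move=> fe; elim: n => [|n IH] //=; rewrite fe. Qed.

Lemma iter_nondecreasing f g s : monotone_op f -> (forall y, g y <= f g y) ->
  nondecreasing_seq (fun n => iter n f g s).
Proof.
by move=> f_mono g_le; apply/nondecreasing_seqP => n; rewrite iterSr; apply: iter_monotone.
Qed.

End MonotoneIteration.

Section CertaintyEquivalent.
Variable R : realType.

Definition cert_equiv (beta w : R) := - beta^-1 * ln w.

Lemma cert_equiv_le beta u w : 0 < beta -> 0 < u -> u <= w ->
  cert_equiv beta w <= cert_equiv beta u.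
Proof.
move=> beta_gt0 u_gt0 uw; rewrite ler_nM2l ?oppr_lt0 ?invr_gt0 //.
by rewrite ler_ln ?posrE // (lt_le_trans u_gt0).
Qed.

Lemma cvg_cert_equiv beta (w : nat -> R) (l : R) : 0 < l -> w @ \oo --> l ->
  (fun n => (cert_equiv beta (w n))%:E) @ \oo --> (cert_equiv beta l)%:E.
Proof.
move=> l_gt0 wl; apply: cvg_EFin; first exact: nearW.
by apply: cvgMr; apply: continuous_cvg => //; apply: continuous_ln.
Qed.

Lemma limn_einf_cert_equiv_cvgy beta (w : nat -> R) : 0 < beta ->
  w @ \oo --> +oo -> limn_einf (fun n => (cert_equiv beta (w n))%:E) = -oo%E.
Proof.
move=> beta_gt0 /cvgryPge wy; apply: (cvgNy_limn_einf_sup _).1; apply/cvgeNyPle => M.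
near=> n; rewrite lee_fin (le_trans (cert_equiv_le beta_gt0 (expR_gt0 (- beta * M)) _)) //.
  by near: n; apply: wy.
by rewrite /cert_equiv expRK mulrA mulrNN mulVf ?gt_eqF // mul1r.
Unshelve. all: by end_near.
Qed.

End CertaintyEquivalent.

Section InitialERM.
Variables (R : realType) (S : nat) (mu : state S -> R) (beta : R).
Hypothesis beta_gt0 : 0 < beta.
Hypothesis mu_ge0 : forall s, 0 <= mu s.
Local Notation e := (sink S).

Lemma eq_ERM_mu (v v' : state S -> \bar R) : (forall s, s != e -> v s = v' s) ->
  ERM_mu mu beta v = ERM_mu mu beta v'.
Proof. by move=> vv'; rewrite /ERM_mu; congr (_ * lne _)%E; apply: eq_bigr => s /vv' ->. Qed.

Lemma le_ERM_mu (v v' : state S -> \bar R) : (forall s, s != e -> v s <= v' s)%E ->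
  (ERM_mu mu beta v <= ERM_mu mu beta v')%E.
Proof.
have nbeta_lt0 : ((- beta)%:E < 0)%E by rewrite lte_fin oppr_lt0.
have nbetaV_lt0 : ((- beta^-1)%:E < 0)%E by rewrite lte_fin oppr_lt0 invr_gt0.
have sum_ge0 (w : state S -> \bar R) :
    (0 <= \sum_(s | s != e) (mu s)%:E * expeR ((- beta)%:E * w s))%E.
  by apply: sume_ge0 => s _; rewrite mule_ge0 ?lee_fin ?expeR_ge0.
move=> vv'; rewrite /ERM_mu leNgt lte_nmul2l // -leNgt.
rewrite lee_lne ?in_itv /= ?sum_ge0 ?leey //; apply: lee_sum => s s_ne.
rewrite lee_wpmul2l ?lee_fin // lee_expeR leNgt lte_nmul2l // -leNgt.
exact: vv'.
Qed.

Hypothesis mu_sink : mu e = 0.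

Lemma ERM_mu_EFin (w : state S -> R) : (forall s, 0 < w s) -> \sum_s mu s = 1 ->
  ERM_mu mu beta (fun s => (cert_equiv beta (w s))%:E) =
  (cert_equiv beta (\sum_s mu s * w s))%:E.
Proof.
move=> w_gt0 mu_sum1; rewrite /ERM_mu (eq_bigr (fun s => (mu s * w s)%:E)) => [|s _].
  rewrite sumEFin; have -> : \sum_(s | s != e) mu s * w s = \sum_s mu s * w s.
    by rewrite [RHS](bigD1 e) //= mu_sink mul0r add0r.
  by rewrite lne_EFin ?convex_comb_gt0 // -EFinM.
by rewrite -EFinM /cert_equiv mulrA mulrNN mulfV ?gt_eqF // mul1r lnK // posrE.
Qed.

Hypothesis mu_gt0 : forall s, s != e -> 0 < mu s.

Lemma ERM_mu_Ny (v : state S -> \bar R) s0 : s0 != e -> v s0 = -oo%E ->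
  ERM_mu mu beta v = -oo%E.
Proof.
move=> s0_ne v_Ny; rewrite /ERM_mu (bigD1 s0) //= v_Ny lt0_muleNy ?lte_fin ?oppr_lt0 //=.
rewrite gt0_muley ?lte_fin ?mu_gt0 // addye; last first.
  rewrite gt_eqF // (lt_le_trans ltNy0) // sume_ge0 // => s _.
  by rewrite mule_ge0 ?lee_fin ?expeR_ge0.
by rewrite lt0_muley // lte_fin oppr_lt0 invr_gt0.
Qed.

End InitialERM.

Section FfunSnoc.
Variable X : finType.

Definition ffun_snoc n (x : {ffun 'I_n -> X}) (y : X) : {ffun 'I_n.+1 -> X} :=
  [ffun i => if unlift ord_max i is Some j then x j else y].

Lemma ffun_snoc_widen n x y (j : 'I_n) :
  ffun_snoc x y (widen_ord (leqnSn n) j) = x j.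
Proof.
have -> : widen_ord (leqnSn n) j = lift ord_max j by apply: ord_inj; rewrite lift_max.
by rewrite ffunE liftK.
Qed.

Lemma ffun_snoc_max n x y : ffun_snoc (n:=n) x y ord_max = y.
Proof. by rewrite ffunE unlift_none. Qed.

Lemma ffun_snoc_val n x y (i : 'I_n.+1) (j : 'I_n) :
  val i = val j -> ffun_snoc x y i = x j.
Proof. by move=> ij; rewrite -(ffun_snoc_widen x y); congr (_ _); apply: val_inj. Qed.

Lemma ffun_snoc_val_max n x y (i : 'I_n.+1) : val i = n -> ffun_snoc x y i = y.
Proof. move=> iE; have -> : i = ord_max by apply: val_inj. exact: ffun_snoc_max. Qed.

Lemma big_ffun_snoc (V : nmodType) n (F : {ffun 'I_n.+1 -> X} -> V) :
  \sum_x F x = \sum_(x : {ffun 'I_n -> X}) \sum_(y : X) F (ffun_snoc x y).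
Proof.
rewrite pair_big /= (reindex (fun xy => ffun_snoc xy.1 xy.2)) //=.
exists (fun x => ([ffun j => x (widen_ord (leqnSn n) j)], x ord_max)).
- move=> [x y] _ /=; rewrite ffun_snoc_max; congr pair.
  by apply/ffunP => j; rewrite ffunE ffun_snoc_widen.
- move=> x _; apply/ffunP => i; rewrite ffunE; case: unliftP => [j ->|->] //.
  by rewrite ffunE; congr (x _); apply: ord_inj; rewrite lift_max.
Qed.

Lemma big_ffun_ord0 (V : nmodType) (F : {ffun 'I_0 -> X} -> V) x0 :
  \sum_x F x = F x0.
Proof. by rewrite (big_pred1 x0) // => x /=; symmetry; apply/eqP/ffunP => -[]. Qed.

End FfunSnoc.

Section FiniteHorizon.
Variables (R : realType) (S : nat) (A : finType) (p r : state S -> A -> state S -> R).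
Hypothesis p_ge0 : forall s a s', 0 <= p s a s'.
Local Notation st := (state S).
Local Notation Exp := (Exp p).
Local Notation traj T := {ffun 'I_T.+1 -> st}.
Local Notation actions T := {ffun 'I_T -> A}.

Definition full_hist T (x : traj T) (a : actions T) :=
  [seq (x (widen_ord (leqnSn T) i), a i) | i <- enum 'I_T].

Lemma size_hist T (x : traj T) (a : actions T) (k : 'I_T) : size (hist x a k) = k.
Proof.
rewrite size_map size_filter -(count_map val (fun n => n < 0 + k)%N) val_enum_ord.
by rewrite -size_filter filter_iota_ltn ?size_iota // ltnW.
Qed.

Lemma size_full_hist T (x : traj T) (a : actions T) : size (full_hist x a) = T.
Proof. by rewrite size_map size_enum_ord. Qed.

Lemma hist_snoc T (x : traj T) y (a : actions T) b (k : 'I_T) :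
  hist (ffun_snoc x y) (ffun_snoc a b) (widen_ord (leqnSn T) k) = hist x a k.
Proof.
rewrite /hist enum_ordSr filter_rcons /= ltnNge ltnW // filter_map -map_comp.
by congr map; apply: funext => i /=; rewrite !ffun_snoc_widen.
Qed.

Lemma hist_snoc_max T (x : traj T) y (a : actions T) b :
  hist (ffun_snoc x y) (ffun_snoc a b) ord_max = full_hist x a.
Proof.
rewrite /hist /full_hist enum_ordSr filter_rcons /= ltnn filter_map -map_comp.
rewrite (@eq_filter _ _ predT) ?filter_predT => [|i]; last by rewrite /= ltn_ord.
by congr map; apply: funext => i /=; rewrite !ffun_snoc_widen.
Qed.

Lemma traj_prob_snoc nu pi T (x : traj T) y (a : actions T) b :
  traj_prob p nu pi (ffun_snoc x y) (ffun_snoc a b) =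
  traj_prob p nu pi x a * (pi (full_hist x a) (x ord_max) b * p (x ord_max) b y).
Proof.
rewrite /traj_prob big_ord_recr /= (@ffun_snoc_val _ _ _ _ _ ord0) //.
rewrite hist_snoc_max ffun_snoc_widen ffun_snoc_max.
rewrite (@ffun_snoc_val_max _ _ _ _ (lift ord0 ord_max)) // -mulrA.
congr (_ * (_ * _)); apply: eq_bigr => k _.
by rewrite hist_snoc !ffun_snoc_widen (@ffun_snoc_val _ _ _ _ _ (lift ord0 k)).
Qed.

Lemma ret_snoc T (x : traj T) y (a : actions T) b :
  ret r (ffun_snoc x y) (ffun_snoc a b) = ret r x a + r (x ord_max) b y.
Proof.
rewrite /ret big_ord_recr /= ffun_snoc_widen ffun_snoc_max.
rewrite (@ffun_snoc_val_max _ _ _ _ (lift ord0 ord_max)) //; congr (_ + _).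
apply: eq_bigr => k _.
by rewrite !ffun_snoc_widen (@ffun_snoc_val _ _ _ _ _ (lift ord0 k)).
Qed.

Lemma traj_prob_ge0 nu pi T (x : traj T) (a : actions T) : (forall s, 0 <= nu s) ->
  (forall h s b, 0 <= pi h s b) -> 0 <= traj_prob p nu pi x a.
Proof.
by move=> nu_ge0 pi_ge0; rewrite mulr_ge0 // prodr_ge0 // => k _; rewrite mulr_ge0.
Qed.

Lemma eq_Exp nu pi T (f1 f2 : traj T -> actions T -> R) :
  (forall x a, f1 x a = f2 x a) -> Exp nu pi f1 = Exp nu pi f2.
Proof. by move=> f12; apply: eq_bigr => x _; apply: eq_bigr => a _; rewrite f12. Qed.

Lemma eq_Exp_policy nu pi1 pi2 T (f : traj T -> actions T -> R) :
  (forall x a (k : 'I_T), pi1 (hist x a k) = pi2 (hist x a k)) ->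
  Exp nu pi1 f = Exp nu pi2 f.
Proof.
move=> pi12; apply: eq_bigr => x _; apply: eq_bigr => a _; congr (_ * _).
by congr (_ * _); apply: eq_bigr => k _; rewrite pi12.
Qed.

Lemma ler_Exp nu pi T (f1 f2 : traj T -> actions T -> R) :
  (forall s, 0 <= nu s) -> (forall h s b, 0 <= pi h s b) ->
  (forall x a, f1 x a <= f2 x a) -> Exp nu pi f1 <= Exp nu pi f2.
Proof.
move=> nu_ge0 pi_ge0 f12; apply: ler_sum => x _; apply: ler_sum => a _.
by rewrite ler_wpM2l ?traj_prob_ge0.
Qed.

Lemma Exp_sum (I : finType) nu pi T (k : I -> R)
    (f : I -> traj T -> actions T -> R) :
  Exp nu pi (fun x a => \sum_i k i * f i x a) = \sum_i k i * Exp nu pi (f i).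
Proof.
under [RHS]eq_bigr => i _ do rewrite mulr_sumr.
rewrite [RHS]exchange_big; apply: eq_bigr => x _.
under [RHS]eq_bigr => i _ do rewrite mulr_sumr.
rewrite [RHS]exchange_big; apply: eq_bigr => a _.
by rewrite mulr_sumr; apply: eq_bigr => i _; rewrite mulrCA.
Qed.

Definition exp_kernel (c : R) s b y := p s b y * expR (- c * r s b y).

Definition bellmanQ c (g : st -> R) s b := \sum_y exp_kernel c s b y * g y.

Definition exp_moment c nu pi T (g : st -> R) :=
  Exp nu pi (T:=T) (fun x a => expR (- c * ret r x a) * g (x ord_max)).

Lemma exp_moment0 c nu pi g : exp_moment c nu pi 0 g = \sum_s nu s * g s.
Proof.
rewrite /exp_moment /Exp big_ffun_snoc (big_ffun_ord0 _ (ffun0 (card_ord 0))).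
apply: eq_bigr => s _; rewrite (big_ffun_ord0 _ (ffun0 (card_ord 0))).
rewrite /traj_prob /ret !big_ord0 mulr0 expR0 mulr1 mul1r ffun_snoc_max.
by rewrite (@ffun_snoc_val_max _ _ _ _ ord0).
Qed.

Lemma exp_momentS c nu pi T g :
  exp_moment c nu pi T.+1 g = Exp nu pi (T:=T) (fun x a => expR (- c * ret r x a) *
     \sum_b pi (full_hist x a) (x ord_max) b * bellmanQ c g (x ord_max) b).
Proof.
rewrite /exp_moment /Exp big_ffun_snoc; apply: eq_bigr => x _.
rewrite exchange_big big_ffun_snoc; apply: eq_bigr => a _ /=.
set E := expR (- c * ret r x a); rewrite !mulr_sumr; apply: eq_bigr => b _.
rewrite /bellmanQ !mulr_sumr; apply: eq_bigr => y _.
rewrite traj_prob_snoc ret_snoc ffun_snoc_max /exp_kernel mulrDr expRD /E; ring.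
Qed.

Variable a0 : A.

Definition greedy_action c g s := Order.arg_min a0 xpredT (bellmanQ c g s).
Definition opt_bellman c g s := bellmanQ c g s (greedy_action c g s).
Definition policy_bellman c (d : st -> A) g s := bellmanQ c g s (d s).

Lemma opt_bellman_le c g s b : opt_bellman c g s <= bellmanQ c g s b.
Proof. by rewrite /opt_bellman /greedy_action; case: arg_minP => // i _; apply. Qed.

Lemma exp_moment_ge_opt c nu pi T g : (forall s, 0 <= nu s) -> is_HR pi ->
  \sum_s nu s * iter T (opt_bellman c) g s <= exp_moment c nu pi T g.
Proof.
move=> nu_ge0 [pi_ge0 pi_sum1]; elim: T g => [|T IH] g; first by rewrite exp_moment0.
rewrite exp_momentS iterSr; apply: le_trans (IH (opt_bellman c g)) _.
apply: ler_Exp => // x a; rewrite ler_wpM2l ?expR_ge0 //.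
rewrite -[leLHS]mul1r -(pi_sum1 (full_hist x a) (x ord_max)) mulr_suml.
by apply: ler_sum => b _; rewrite ler_wpM2l ?opt_bellman_le.
Qed.

Definition greedy_policy c g T : nat -> st -> A :=
  fun k => greedy_action c (iter (T - k.+1) (opt_bellman c) g).

Lemma exp_moment_greedy c nu g T :
  exp_moment c nu (md_policy R (greedy_policy c g T)) T g =
  \sum_s nu s * iter T (opt_bellman c) g s.
Proof.
elim: T g => [|T IH] g; first by rewrite exp_moment0.
rewrite exp_momentS iterSr -IH /exp_moment.
transitivity (Exp nu (md_policy R (greedy_policy c g T.+1)) (T:=T)
   (fun x a => expR (- c * ret r x a) * opt_bellman c g (x ord_max))).
  by apply: eq_Exp => x a; rewrite /md_policy size_full_hist sum_delta /greedy_policy subnn.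
apply: eq_Exp_policy => x a k; apply: funext => s; apply: funext => b.
by rewrite /md_policy size_hist /greedy_policy subSn // iterSr.
Qed.

Lemma exp_moment_sd c nu (d : {ffun st -> A}) g T :
  exp_moment c nu (sd_policy R d) T g = \sum_s nu s * iter T (policy_bellman c d) g s.
Proof.
elim: T g => [|T IH] g; first by rewrite exp_moment0.
rewrite exp_momentS iterSr -IH /exp_moment.
by apply: eq_Exp => x a; rewrite /sd_policy sum_delta.
Qed.

End FiniteHorizon.

Section BellmanOperators.
Variables (R : realType) (S : nat) (A : finType).
Variables (p r : state S -> A -> state S -> R) (a0 : A).
Hypothesis p_ge0 : forall s a s', 0 <= p s a s'.
Hypothesis p_sum1 : forall s a, \sum_s' p s a s' = 1.
Hypothesis p_sink : forall a, p (sink S) a (sink S) = 1.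
Hypothesis r_sink : forall a, r (sink S) a (sink S) = 0.
Local Notation st := (state S).
Local Notation e := (sink S).
Local Notation exp_kernel := (exp_kernel p r).
Local Notation bellmanQ := (bellmanQ p r).
Local Notation opt_bellman := (opt_bellman p r a0).
Local Notation policy_bellman := (policy_bellman p r).

Definition sink_ind : st -> R := fun s => (s == e)%:R.

Lemma sink_ind_ge0 y : 0 <= sink_ind y.
Proof. exact: ler0n. Qed.

Lemma exp_kernel_ge0 c s b y : 0 <= exp_kernel c s b y.
Proof. by rewrite mulr_ge0 ?expR_ge0. Qed.

Lemma exp_kernel_gt0 c s b y : p s b y != 0 -> 0 < exp_kernel c s b y.
Proof. by move=> p_neq0; rewrite mulr_gt0 ?expR_gt0 // lt_def p_neq0 p_ge0. Qed.

Lemma exp_kernel0 s b y : exp_kernel 0 s b y = p s b y.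
Proof. by rewrite /exp_kernel oppr0 mul0r expR0 mulr1. Qed.

Lemma ler_bellmanQ c g1 g2 s b : (forall y, g1 y <= g2 y) ->
  bellmanQ c g1 s b <= bellmanQ c g2 s b.
Proof. by move=> g12; apply: ler_sum => y _; rewrite ler_wpM2l ?exp_kernel_ge0. Qed.

Lemma bellmanQ_ge0 c g s b : (forall y, 0 <= g y) -> 0 <= bellmanQ c g s b.
Proof. by move=> g_ge0; apply: sumr_ge0 => y _; rewrite mulr_ge0 ?exp_kernel_ge0. Qed.

Lemma bellmanQ_gt0 c g s b : (forall y, 0 < g y) -> 0 < bellmanQ c g s b.
Proof.
move=> g_gt0; rewrite /bellmanQ; under eq_bigr => y _ do rewrite -mulrA.
by apply: convex_comb_gt0 => // y; rewrite mulr_gt0 ?expR_gt0.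
Qed.

Lemma bellmanQ_ge_term c g s b y : (forall y, 0 <= g y) ->
  exp_kernel c s b y * g y <= bellmanQ c g s b.
Proof.
move=> g_ge0; rewrite /bellmanQ (bigD1 y) //= lerDl.
by apply: sumr_ge0 => y' _; rewrite mulr_ge0 ?exp_kernel_ge0.
Qed.

Lemma p_from_sink b y : p e b y = (y == e)%:R.
Proof.
have := p_sum1 e b; rewrite (bigD1 e) //= p_sink => /(congr1 (fun x => x - 1)).
rewrite addrAC subrr add0r => rest0; case: eqP => [->|/eqP ye] //.
exact: (psumr_eq0P (fun y _ => p_ge0 _ _ y) rest0).
Qed.

Lemma bellmanQ_sink c g b : bellmanQ c g e b = g e.
Proof.
rewrite /bellmanQ /exp_kernel; under eq_bigr => y _ do rewrite p_from_sink -!mulrA.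
by rewrite sum_delta r_sink mulr0 expR0 mul1r.
Qed.

Lemma iter_policy_bellman_ge0 c d g n s : (forall y, 0 <= g y) ->
  0 <= iter n (policy_bellman c d) g s.
Proof. by move=> g_ge0; apply: iter_ge0 => // g' g'_ge0 s'; apply: bellmanQ_ge0. Qed.

Lemma iter_opt_bellman_ge0 c g n s : (forall y, 0 <= g y) ->
  0 <= iter n (opt_bellman c) g s.
Proof. by move=> g_ge0; apply: iter_ge0 => // g' g'_ge0 s'; apply: bellmanQ_ge0. Qed.

Lemma iter_policy_bellman_sink c d g n : iter n (policy_bellman c d) g e = g e.
Proof. by apply: iter_fixed => g'; apply: bellmanQ_sink. Qed.

Lemma iter_opt_bellman_sink c g n : iter n (opt_bellman c) g e = g e.
Proof. by apply: iter_fixed => g'; apply: bellmanQ_sink. Qed.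

Lemma opt_bellman_monotone c : monotone_op (opt_bellman c).
Proof.
move=> g1 g2 g12 s.
apply: le_trans (opt_bellman_le p r a0 c g1 s (greedy_action p r a0 c g2 s)) _.
exact: ler_bellmanQ.
Qed.

Lemma policy_bellman_monotone c d : monotone_op (policy_bellman c d).
Proof. by move=> g1 g2 g12 s; apply: ler_bellmanQ. Qed.

Lemma iter_policy_bellmanD c d g1 g2 n s :
  iter n (policy_bellman c d) (g1 \+ g2) s =
  iter n (policy_bellman c d) g1 s + iter n (policy_bellman c d) g2 s.
Proof.
elim: n s => [|n IH] s //=; rewrite /policy_bellman /bellmanQ -big_split /=.
by apply: eq_bigr => y _; rewrite IH mulrDr.
Qed.

Lemma iter_policy_bellmanZ c d (k : R) g n s :
  iter n (policy_bellman c d) (fun y => k * g y) s = k * iter n (policy_bellman c d) g s.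
Proof.
elim: n s => [|n IH] s //=; rewrite /policy_bellman /bellmanQ mulr_sumr.
by apply: eq_bigr => y _; rewrite IH mulrCA.
Qed.

Definition policy_closed (d : st -> A) (F : st -> Prop) :=
  forall s y, F s -> p s (d s) y != 0 -> F y.

Lemma iter_policy_bellman_le_on c d F g1 g2 n s : policy_closed d F ->
  (forall y, F y -> g1 y <= g2 y) -> F s ->
  iter n (policy_bellman c d) g1 s <= iter n (policy_bellman c d) g2 s.
Proof.
move=> F_closed g12; elim: n s => [|n IH] s Fs /=; first exact: g12.
apply: ler_sum => y _; have [/eqP p0|/(F_closed _ _ Fs) Fy] := boolP (p s (d s) y == 0).
  by rewrite /exp_kernel p0 !mul0r.
by rewrite ler_wpM2l ?exp_kernel_ge0 ?IH.
Qed.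

Lemma sink_ind_le_op (f : (st -> R) -> st -> R) :
  (forall g, f g e = g e) -> (forall g, (forall y, 0 <= g y) -> forall s, 0 <= f g s) ->
  forall s, sink_ind s <= f sink_ind s.
Proof.
move=> fe f_ge0 s; rewrite /sink_ind; case: eqP => [->|_]; first by rewrite fe /sink_ind eqxx.
by apply: f_ge0; apply: sink_ind_ge0.
Qed.

Variable beta : R.
Hypothesis beta_gt0 : 0 < beta.

Definition opt_value t := iter t (opt_bellman beta) (cst 1).
Definition policy_value (d : st -> A) t := iter t (policy_bellman beta d) (cst 1).

Lemma opt_value_gt0 t s : 0 < opt_value t s.
Proof. by elim: t s => [|t IH] s //=; apply: bellmanQ_gt0. Qed.

Lemma opt_value_le_policy d t s : opt_value t s <= policy_value d t s.
Proof.
by apply: iter_le_iter => [|g s']; [apply: policy_bellman_monotone | apply: opt_bellman_le].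
Qed.

Lemma md_policy_HR (d : nat -> st -> A) : is_HR (md_policy R d).
Proof.
split=> [h s b|h s]; first by rewrite /md_policy ler0n.
by rewrite /md_policy (bigD1 (d (size h) s)) //= eqxx big1 ?addr0 // => b /negbTE ->.
Qed.

Lemma v_t_exp_moment t pi s :
  v_t p r beta t pi s = cert_equiv beta (exp_moment p r beta (Defs.dirac R s) pi t (cst 1)).
Proof. by rewrite /v_t /ERM_ret; congr (_ * ln _); apply: eq_Exp => x a; rewrite mulr1. Qed.

Lemma v_t_sd_policy d t s :
  v_t p r beta t (sd_policy R d) s = cert_equiv beta (policy_value d t s).
Proof. by rewrite v_t_exp_moment exp_moment_sd sum_delta. Qed.

Lemma v_t_star_opt_value t s : v_t_star p r beta t s = (cert_equiv beta (opt_value t s))%:E.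
Proof.
apply/eqP; rewrite eq_le; apply/andP; split.
- apply: ge_ereal_sup => _ [d _ <-]; rewrite lee_fin v_t_exp_moment.
  apply: cert_equiv_le => //; first exact: opt_value_gt0.
  rewrite -(sum_delta s (opt_value t)).
  by apply: (exp_moment_ge_opt r p_ge0) (md_policy_HR d) => s'; rewrite ler0n.
- apply: ereal_sup_ubound; exists (greedy_policy p r a0 beta (cst 1) t) => //.
  by rewrite v_t_exp_moment exp_moment_greedy sum_delta.
Qed.

Lemma g_t_star_opt_value mu t : (forall s, 0 <= mu s) -> \sum_s mu s = 1 ->
  g_t_star p r mu beta t = (cert_equiv beta (\sum_s mu s * opt_value t.+1 s))%:E.
Proof.
move=> mu_ge0 mu_sum1.
have g_t_moment pi :
    g_t p r mu beta t pi = cert_equiv beta (exp_moment p r beta mu pi t.+1 (cst 1)).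
  by rewrite /g_t /ERM_ret; congr (_ * ln _); apply: eq_Exp => x a; rewrite mulr1.
apply/eqP; rewrite eq_le; apply/andP; split.
- apply: ge_ereal_sup => _ [pi HRpi <-]; rewrite lee_fin g_t_moment.
  apply: cert_equiv_le => //; first by apply: convex_comb_gt0 => // s; apply: opt_value_gt0.
  exact: (exp_moment_ge_opt r p_ge0).
- apply: ereal_sup_ubound; exists (md_policy R (greedy_policy p r a0 beta (cst 1) t.+1)).
    exact: md_policy_HR.
  by rewrite g_t_moment exp_moment_greedy.
Qed.

Definition visit_prob (d : {ffun st -> A}) s0 t s' :=
  Exp p (Defs.dirac R s0) (sd_policy R d) (T:=t) (fun x _ => (x ord_max == s')%:R).

Lemma visit_prob_ge0 d s0 t s' : 0 <= visit_prob d s0 t s'.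
Proof.
apply: sumr_ge0 => x _; apply: sumr_ge0 => a _.
by rewrite mulr_ge0 ?ler0n ?(traj_prob_ge0 p_ge0) // => [y|h y b]; rewrite ler0n.
Qed.

Lemma closed_visits_ge1 (d : {ffun st -> A}) (F : st -> Prop) s0 t :
  policy_closed d F -> ~ F e -> F s0 -> 1 <= \sum_(s' | s' != e) visit_prob d s0 t s'.
Proof.
move=> F_closed Fe Fs0; pose chi y : R := (`[< F y >])%:R.
have chi_le1 y : chi y <= 1 by rewrite lern1 leq_b1.
have chi_sub y : chi y <= policy_bellman 0 d chi y.
  rewrite /chi; case: asboolP => Fy; last by apply: bellmanQ_ge0 => y'; rewrite ler0n.
  rewrite -[leLHS](p_sum1 y (d y)); apply: ler_sum => y' _; rewrite exp_kernel0.
  have [->|/(F_closed _ _ Fy) Fy'] := eqVneq (p y (d y) y') 0; first by rewrite mul0r.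
  by rewrite asboolT //= mulr1n mulr1.
have : chi s0 <= iter t (policy_bellman 0 d) chi s0.
  exact: (iter_nondecreasing s0 (policy_bellman_monotone 0 d) chi_sub (leq0n t)).
rewrite /chi asboolT // => /le_trans; apply.
rewrite -(sum_delta s0 (iter t _ chi)) -exp_moment_sd /exp_moment.
have -> : (fun x (a : {ffun 'I_t -> A}) => expR (- 0 * ret r x a) * chi (x ord_max)) =
    (fun x a => \sum_s' chi s' * (x ord_max == s')%:R).
  apply/funext => x; apply/funext => a; rewrite oppr0 mul0r expR0 mul1r.
  by under eq_bigr => s' _ do rewrite mulrC eq_sym; rewrite sum_delta.
rewrite Exp_sum (bigD1 e) //= {1}/chi asboolF // mul0r add0r.
by apply: ler_sum => s' _; rewrite ler_piMl ?visit_prob_ge0.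
Qed.

Lemma transient_visits_lt1 d s0 : transient p -> s0 != e ->
  exists t, \sum_(s' | s' != e) visit_prob d s0 t s' < 1.
Proof.
move=> p_tr s0_ne; apply: contrapT => never_lt1.
have visits_ge1 t : 1 <= \sum_(s' | s' != e) visit_prob d s0 t s'.
  by rewrite leNgt; apply/negP => lt1; apply: never_lt1; exists t.
pose L s' := fine (\sum_(0 <= t <oo) (visit_prob d s0 t s')%:E).
have partial_le s' N : s' != e -> \sum_(0 <= t < N) visit_prob d s0 t s' <= L s'.
  move=> s'_ne; have := p_tr d s0 s' s0_ne s'_ne => fin.
  rewrite -lee_fin /L fineK; last first.
    by rewrite ge0_fin_numE // nneseries_ge0 // => n _ _; rewrite lee_fin visit_prob_ge0.
  by rewrite -sumEFin; apply: nneseries_lim_ge => n _ _; rewrite lee_fin visit_prob_ge0.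
pose N := (Num.truncn (\sum_(s' | s' != e) L s')).+1.
have : N%:R <= \sum_(s' | s' != e) L s'.
  apply: le_trans (_ : \sum_(0 <= t < N) (1 : R) <= _); first by rewrite sumr_const_nat subn0.
  apply: le_trans (_ : \sum_(0 <= t < N) \sum_(s' | s' != e) visit_prob d s0 t s' <= _).
    by apply: ler_sum => t _.
  by rewrite exchange_big; apply: ler_sum => s' s'_ne; apply: partial_le.
by rewrite leNgt truncnS_gt.
Qed.

(* Otherwise the states never leading to the sink form a closed set avoiding
   it, which transience forbids. *)
Lemma sink_reachable (d : {ffun st -> A}) s : transient p -> s != e ->
  exists m, 0 < iter m (policy_bellman beta d) sink_ind s.
Proof.
move=> p_tr s_ne; apply: contrapT => unreached.
have ind_ge0 := sink_ind_ge0.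
pose F y := y != e /\ forall m, iter m (policy_bellman beta d) sink_ind y = 0.
have F_closed : policy_closed d F.
  move=> y y' [_ y0] py'; have K_gt0 := exp_kernel_gt0 beta py'.
  have term_le0 m : exp_kernel beta y (d y) y' * iter m (policy_bellman beta d) sink_ind y' <= 0.
    by rewrite -(y0 m.+1); apply: bellmanQ_ge_term => y''; apply: iter_policy_bellman_ge0.
  split=> [|m].
    apply/negP => /eqP y'e; have := term_le0 0.
    by rewrite {2}y'e /= /sink_ind eqxx mulr1 leNgt K_gt0.
  apply/eqP; rewrite eq_le iter_policy_bellman_ge0 // andbT.
  by rewrite -(pmulr_rle0 _ K_gt0).
have Fs : F s.
  split=> // m; apply/eqP; rewrite eq_le iter_policy_bellman_ge0 // andbT leNgt.
  by apply/negP => pos; apply: unreached; exists m.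
have [t] := transient_visits_lt1 d p_tr s_ne.
have not_Fe : ~ F e by case; rewrite eqxx.
by rewrite ltNge (@closed_visits_ge1 d F).
Qed.

(* The optimal exponential moment of the return on absorption by time t. *)
Definition sink_value t := iter t (opt_bellman beta) sink_ind.

Lemma sink_value_nondecreasing s : nondecreasing_seq (fun t => sink_value t s).
Proof.
apply: iter_nondecreasing (opt_bellman_monotone beta) _.
by apply: sink_ind_le_op => [g|g g_ge0 y]; [apply: bellmanQ_sink | apply: bellmanQ_ge0].
Qed.

Lemma sink_value_le_opt t s : sink_value t s <= opt_value t s.
Proof. by apply: iter_monotone (opt_bellman_monotone beta) _ _ _ _ => y; rewrite lern1 leq_b1. Qed.

Definition bounded_state s := exists M, forall t, sink_value t s <= M.
Definition sink_limit s := limn (fun t => sink_value t s).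

Lemma sink_value_cvg s : bounded_state s -> (fun t => sink_value t s) @ \oo --> sink_limit s.
Proof.
move=> [M leM].
have cvg_sup : (fun t => sink_value t s) @ \oo --> sup (range (fun t => sink_value t s)).
  apply: nondecreasing_cvgn; first exact: sink_value_nondecreasing.
  by exists M => _ [t _ <-].
by rewrite /sink_limit (cvg_lim _ cvg_sup).
Qed.

Lemma sink_value_le_limit s t : bounded_state s -> sink_value t s <= sink_limit s.
Proof.
move=> bs; apply: nondecreasing_cvgn_le; first exact: sink_value_nondecreasing.
exact: cvgP (sink_value_cvg bs).
Qed.

Lemma sink_limit_ge0 s : bounded_state s -> 0 <= sink_limit s.
Proof.
by move=> bs; apply: le_trans (sink_value_le_limit 0 bs); apply: sink_ind_ge0.
Qed.

Lemma bounded_state_sink : bounded_state e.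
Proof. by exists 1 => t; rewrite /sink_value iter_opt_bellman_sink /sink_ind eqxx. Qed.

Lemma sink_limit_sink : sink_limit e = 1.
Proof.
rewrite /sink_limit (_ : (fun t => _) = cst 1) ?lim_cst //.
by apply/funext => t; rewrite /sink_value iter_opt_bellman_sink /sink_ind eqxx.
Qed.

Lemma opt_value_cvgy s : ~ bounded_state s -> (fun t => opt_value t s) @ \oo --> +oo.
Proof.
move=> unbounded; apply/cvgryPge => M.
have [t0 ltM] : exists t0, M < sink_value t0 s.
  apply: contrapT => never; apply: unbounded; exists M => t.
  by rewrite leNgt; apply/negP => ltM; apply: never; exists t.
exists t0 => // t le_t0t; apply: le_trans (ltW ltM) _.
exact: le_trans (sink_value_nondecreasing s le_t0t) (sink_value_le_opt t s).
Qed.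

(* If every action b failed at some stage t_b, the greedy action at a stage
   beyond all the t_b would fail there, where it realises sink_value. *)
Lemma exists_dominated_action s : bounded_state s ->
  exists b, forall t, bellmanQ beta (sink_value t) s b <= sink_limit s.
Proof.
move=> bs; apply: contrapT => none.
have fails b : exists t, sink_limit s < bellmanQ beta (sink_value t) s b.
  apply: contrapT => never; apply: none; exists b => t.
  by rewrite leNgt; apply/negP => lt; apply: never; exists t.
have [tb tb_fails] := choice fails.
pose N := (\max_b tb b)%N; pose b := greedy_action p r a0 beta (sink_value N) s.
have : bellmanQ beta (sink_value (tb b)) s b <= sink_value N.+1 s.
  by apply: ler_bellmanQ => y; apply: sink_value_nondecreasing; apply: leq_bigmax.
by move=> /(lt_le_trans (tb_fails b)); rewrite ltNge sink_value_le_limit.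
Qed.

Lemma exists_dominated_policy : exists d : {ffun st -> A},
  forall s, bounded_state s -> forall t, bellmanQ beta (sink_value t) s (d s) <= sink_limit s.
Proof.
have dominated s : exists b, bounded_state s ->
    forall t, bellmanQ beta (sink_value t) s b <= sink_limit s.
  have [bs|] := pselect (bounded_state s); last by exists a0.
  by have [b b_dom] := exists_dominated_action bs; exists b.
have [f f_dom] := choice dominated.
by exists [ffun s => f s] => s; rewrite ffunE; apply: f_dom.
Qed.

Lemma v_inf_star_limit s :
  v_inf_star p r beta s = limn_einf (fun t => (cert_equiv beta (opt_value t s))%:E).
Proof. by rewrite /v_inf_star; congr limn_einf; apply/funext => t; rewrite v_t_star_opt_value. Qed.

Lemma v_inf_sd_limit d s : v_inf p r beta (sd_policy R d) s =
  limn_einf (fun t => (cert_equiv beta (policy_value d t s))%:E).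
Proof. by rewrite /v_inf; congr limn_einf; apply/funext => t; rewrite v_t_sd_policy. Qed.

Lemma v_inf_le_star d s : (v_inf p r beta (sd_policy R d) s <= v_inf_star p r beta s)%E.
Proof. by apply: le_limn_einf => t; apply: ereal_sup_ubound; exists (fun _ s => d s). Qed.

Variable mu : st -> R.
Hypothesis mu_sink : mu e = 0.
Hypothesis mu_gt0 : forall s, s != e -> 0 < mu s.
Hypothesis mu_sum1 : \sum_s mu s = 1.

Lemma mu_ge0 s : 0 <= mu s.
Proof. by have [->|/mu_gt0/ltW] := eqVneq s e; rewrite ?mu_sink. Qed.

Lemma g_inf_star_limit : g_inf_star p r mu beta =
  limn_einf (fun t => (cert_equiv beta (\sum_s mu s * opt_value t.+1 s))%:E).
Proof.
rewrite /g_inf_star; congr limn_einf; apply/funext => t.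
by rewrite g_t_star_opt_value //; apply: mu_ge0.
Qed.

Lemma opt_moment_cvgy s0 : ~ bounded_state s0 -> s0 != e ->
  (fun t => \sum_s mu s * opt_value t.+1 s) @ \oo --> +oo.
Proof.
move=> unb s0_ne; apply/cvgryPge => M.
have := opt_value_cvgy unb; rewrite -cvg_shiftS => /cvgryPge /(_ (M / mu s0)).
apply: filterS => t; rewrite ler_pdivrMr ?mu_gt0 // mulrC => /le_trans; apply.
rewrite (bigD1 s0) // lerDl; apply: sumr_ge0 => s _.
by rewrite mulr_ge0 ?mu_ge0 ?ltW ?opt_value_gt0.
Qed.

Section DominatedPolicy.
Variable d : {ffun st -> A}.
Hypothesis d_dominated : forall s, bounded_state s ->
  forall t, bellmanQ beta (sink_value t) s (d s) <= sink_limit s.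
Hypothesis p_transient : transient p.
Local Notation Td := (policy_bellman beta d).

Lemma bounded_state_closed : policy_closed d bounded_state.
Proof.
move=> s y bs py; have K_gt0 := exp_kernel_gt0 beta py.
exists (sink_limit s / exp_kernel beta s (d s) y) => t.
rewrite ler_pdivlMr // mulrC; apply: le_trans (d_dominated bs t).
by apply: bellmanQ_ge_term => y'; apply: iter_opt_bellman_ge0; apply: sink_ind_ge0.
Qed.

Lemma sink_limit_superharmonic s : bounded_state s -> Td sink_limit s <= sink_limit s.
Proof.
move=> bs.
have Q_cvg : (fun t => bellmanQ beta (sink_value t) s (d s)) @ \oo --> Td sink_limit s.
  apply: cvg_big => // [|y _]; first exact: add_continuous.
  have [p0|/(bounded_state_closed bs) yb] := eqVneq (p s (d s) y) 0.
    by rewrite /exp_kernel p0 !mul0r; under eq_cvg do rewrite mul0r; apply: cvg_cst.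
  by apply: cvgMr; apply: sink_value_cvg.
rewrite -(cvg_lim _ Q_cvg) //; apply: limr_le; first exact: cvgP Q_cvg.
by apply: nearW => t; apply: d_dominated.
Qed.

Lemma iter_sink_limit_le t s : bounded_state s -> iter t Td sink_limit s <= sink_limit s.
Proof.
elim: t s => [|t IH] s bs //; rewrite iterSr; apply: le_trans (IH s bs).
apply: (iter_policy_bellman_le_on _ _ bounded_state_closed _ bs) => y yb.
exact: sink_limit_superharmonic.
Qed.

Lemma sink_ind_le_limit y : bounded_state y -> sink_ind y <= sink_limit y.
Proof.
move=> yb; rewrite /sink_ind; case: eqP => [->|_]; first by rewrite sink_limit_sink.
exact: sink_limit_ge0.
Qed.

Lemma iter_sink_ind_le_limit t s : bounded_state s -> iter t Td sink_ind s <= sink_limit s.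
Proof.
move=> bs; apply: le_trans (iter_sink_limit_le t bs).
exact: (iter_policy_bellman_le_on _ _ bounded_state_closed sink_ind_le_limit bs).
Qed.

Lemma sink_limit_gt0 s : bounded_state s -> 0 < sink_limit s.
Proof.
move=> bs; have [->|s_ne] := eqVneq s e; first by rewrite sink_limit_sink.
have [m pos] := sink_reachable d p_transient s_ne.
exact: lt_le_trans pos (iter_sink_ind_le_limit m bs).
Qed.

Lemma exists_uniform_reach :
  exists m c, 0 < c /\ forall y, y != e -> c <= iter m Td sink_ind y.
Proof.
have reach y : exists m, y != e -> 0 < iter m Td sink_ind y.
  have [->|y_ne] := eqVneq y e; first by exists 0%N.
  by have [m pos] := sink_reachable d p_transient y_ne; exists m.
have [ms ms_pos] := choice reach; pose m := (\max_y ms y)%N.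
have nondecr y : nondecreasing_seq (fun n => iter n Td sink_ind y).
  apply: iter_nondecreasing (policy_bellman_monotone beta d) _.
  by apply: sink_ind_le_op => [g|g g_ge0 y']; [apply: bellmanQ_sink | apply: bellmanQ_ge0].
exists m, (\big[Order.min/1]_(y | y != e) iter m Td sink_ind y); split.
  apply: (big_ind (fun x : R => 0 < x)) => // [x x' x_gt0 x'_gt0|y y_ne].
    by rewrite lt_min x_gt0.
  exact: lt_le_trans (ms_pos y y_ne) (nondecr y _ _ (leq_bigmax y)).
by move=> y y_ne; apply: bigmin_le_cond.
Qed.

Definition excess y := sink_limit y - sink_ind y.

Lemma excess_ge0 y : bounded_state y -> 0 <= excess y.
Proof. by move=> yb; rewrite subr_ge0 sink_ind_le_limit. Qed.

Lemma iter_excess_ge0 t s : bounded_state s -> 0 <= iter t Td excess s.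
Proof.
move=> bs; rewrite -[leLHS](mul0r (iter t Td excess s)) -iter_policy_bellmanZ.
apply: (iter_policy_bellman_le_on _ _ bounded_state_closed _ bs) => y yb.
by rewrite mul0r excess_ge0.
Qed.

Lemma iter_sink_limit_split t s :
  iter t Td sink_limit s = iter t Td sink_ind s + iter t Td excess s.
Proof.
rewrite -iter_policy_bellmanD; congr (iter _ _ _ _).
by apply/funext => y; rewrite /= /excess addrC subrK.
Qed.

(* m steps absorb mass at least c from every non-sink state, which is a
   fraction at least c / Umax of its excess. *)
Lemma iter_excess_contract :
  exists m th, 0 <= th < 1 /\
    forall y, bounded_state y -> iter m Td excess y <= th * excess y.
Proof.
have [m [c [c_gt0 c_le]]] := exists_uniform_reach.
pose Umax := c + \sum_y `|sink_limit y|.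
have norm_ge0 : 0 <= \sum_y `|sink_limit y| by apply: sumr_ge0 => y _.
have U_le y : sink_limit y <= Umax.
  apply: le_trans (ler_norm _) _; rewrite /Umax (bigD1 y) //= addrCA lerDl.
  by rewrite addr_ge0 ?(ltW c_gt0) //; apply: sumr_ge0 => i _.
have Umax_gt0 : 0 < Umax by rewrite ltr_pwDl.
have q_gt0 : 0 < c / Umax by rewrite divr_gt0.
have q_le1 : c / Umax <= 1 by rewrite ler_pdivrMr // mul1r lerDl.
exists m, (1 - c / Umax); split.
  by rewrite subr_ge0 q_le1 /= ltrBlDl ltrDr.
move=> y yb; have [->|y_ne] := eqVneq y e.
  by rewrite iter_policy_bellman_sink /excess sink_limit_sink /sink_ind eqxx subrr mulr0.
have := iter_sink_limit_split m y; have := iter_sink_limit_le m yb.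
have := c_le y y_ne; have : c / Umax * sink_limit y <= c.
  by rewrite mulrAC ler_pdivrMr // ler_wpM2l ?U_le // ltW.
have -> : excess y = sink_limit y by rewrite /excess /sink_ind (negbTE y_ne) subr0.
rewrite mulrBl mul1r; lra.
Qed.

Lemma iter_excess_nonincreasing s : bounded_state s ->
  nonincreasing_seq (fun t => iter t Td excess s).
Proof.
move=> bs; apply/nonincreasing_seqP => t; rewrite iterSr.
apply: (iter_policy_bellman_le_on _ _ bounded_state_closed _ bs) => y yb.
have := iter_sink_limit_split 1 y; have := sink_limit_superharmonic yb.
have : sink_ind y <= Td sink_ind y.
  by apply: sink_ind_le_op => [g|g g_ge0 y']; [apply: bellmanQ_sink | apply: bellmanQ_ge0].
have : excess y = sink_limit y - sink_ind y by [].
rewrite /=; lra.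
Qed.

Lemma iter_excess_cvg0 s : bounded_state s -> (fun t => iter t Td excess s) @ \oo --> 0.
Proof.
move=> bs; have [m [th [/andP[th_ge0 th_lt1] contract]]] := iter_excess_contract.
have geometric k y : bounded_state y -> iter (k * m) Td excess y <= th ^+ k * excess y.
  elim: k y => [|k IH] y yb; first by rewrite mul0n expr0 mul1r.
  rewrite mulSn iterD; apply: le_trans (_ : iter m Td (fun y => th ^+ k * excess y) y <= _).
    exact: (iter_policy_bellman_le_on _ _ bounded_state_closed IH yb).
  rewrite iter_policy_bellmanZ exprSr -mulrA ler_wpM2l ?exprn_ge0 //.
  exact: contract.
apply/cvgrPdist_le => eps eps_gt0.
have : (fun k => th ^+ k * excess s) @ \oo --> 0.
  by rewrite -(mul0r (excess s)); apply: cvgMl; apply: cvg_expr; rewrite ger0_norm.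
move=> /cvgrPdist_le /(_ eps eps_gt0) [N _ closeN].
exists (N * m)%N => // t le_Nm_t.
have := closeN N (leqnn N).
rewrite !sub0r !normrN !ger0_norm ?mulr_ge0 ?exprn_ge0 ?excess_ge0 ?iter_excess_ge0 //.
exact: le_trans (le_trans (iter_excess_nonincreasing bs le_Nm_t) (geometric N s bs)).
Qed.

Lemma policy_value_le : exists c, 0 < c /\ forall t s, bounded_state s ->
  policy_value d t s <= sink_limit s + c^-1 * iter t Td excess s.
Proof.
have [m [c [c_gt0 c_le]]] := exists_uniform_reach.
exists c; split=> // t s bs.
have -> : policy_value d t s = iter t Td sink_ind s + iter t Td (fun y => 1 - sink_ind y) s.
  rewrite -iter_policy_bellmanD; congr (iter _ _ _ _).
  by apply/funext => y; rewrite /= addrC subrK.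
rewrite lerD ?iter_sink_ind_le_limit // -iter_policy_bellmanZ.
apply: (iter_policy_bellman_le_on _ _ bounded_state_closed _ bs) => y yb.
rewrite /excess /sink_ind; case: eqP => [->|/eqP y_ne].
  by rewrite sink_limit_sink subrr mulr0.
rewrite !subr0 ler_pdivlMl // mulr1.
exact: le_trans (c_le y y_ne) (iter_sink_ind_le_limit m yb).
Qed.

Lemma policy_value_cvg s : bounded_state s ->
  (fun t => policy_value d t s) @ \oo --> sink_limit s.
Proof.
move=> bs; have [c [c_gt0 Wd_le]] := policy_value_le.
apply: (@squeeze_cvgr _ _ _ _ (fun t => sink_value t s)
  (fun t => sink_limit s + c^-1 * iter t Td excess s)).
- apply: nearW => t; rewrite Wd_le // andbT.
  exact: le_trans (sink_value_le_opt t s) (opt_value_le_policy d t s).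
- exact: sink_value_cvg.
- have excess_term : (fun t => c^-1 * iter t Td excess s) @ \oo --> 0.
    by rewrite -(mulr0 c^-1); apply: cvgMr; apply: iter_excess_cvg0.
  by have := cvgD (cvg_cst (sink_limit s)) excess_term; rewrite addr0; apply.
Qed.

Lemma opt_value_cvg s : bounded_state s -> (fun t => opt_value t s) @ \oo --> sink_limit s.
Proof.
move=> bs; apply: (@squeeze_cvgr _ _ _ _ (fun t => sink_value t s) (fun t => policy_value d t s)).
- by apply: nearW => t; rewrite sink_value_le_opt opt_value_le_policy.
- exact: sink_value_cvg.
- exact: policy_value_cvg.
Qed.

Lemma v_inf_bounded s : bounded_state s ->
  v_inf_star p r beta s = (cert_equiv beta (sink_limit s))%:E /\
  v_inf p r beta (sd_policy R d) s = (cert_equiv beta (sink_limit s))%:E.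
Proof.
move=> bs; rewrite v_inf_star_limit v_inf_sd_limit.
split; apply: (cvg_limn_einf_sup _).1; apply: cvg_cert_equiv (sink_limit_gt0 bs) _.
  exact: opt_value_cvg.
exact: policy_value_cvg.
Qed.

Lemma v_inf_unbounded s : ~ bounded_state s ->
  v_inf_star p r beta s = -oo%E /\ v_inf p r beta (sd_policy R d) s = -oo%E.
Proof.
move=> unb; rewrite v_inf_star_limit v_inf_sd_limit; have W_y := opt_value_cvgy unb.
split; apply: limn_einf_cert_equiv_cvgy => //.
by apply: ger_cvgy W_y; apply: nearW => t; apply: opt_value_le_policy.
Qed.

Lemma v_inf_star_sd s : v_inf_star p r beta s = v_inf p r beta (sd_policy R d) s.
Proof.
have [bs|unb] := pselect (bounded_state s).
  by have [-> ->] := v_inf_bounded bs.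
by have [-> ->] := v_inf_unbounded unb.
Qed.

Lemma g_inf_star_ERM : g_inf_star p r mu beta = ERM_mu mu beta (v_inf_star p r beta).
Proof.
rewrite g_inf_star_limit.
have [all_bounded|/existsNP[s0 unb]] := pselect (forall s, bounded_state s).
  have U_gt0 s : 0 < sink_limit s by apply: sink_limit_gt0.
  rewrite (@eq_ERM_mu _ _ mu beta _ (fun s => (cert_equiv beta (sink_limit s))%:E)).
    rewrite ERM_mu_EFin //; last exact: mu_ge0.
    apply: (cvg_limn_einf_sup _).1; apply: cvg_cert_equiv.
      by apply: convex_comb_gt0 => //; apply: mu_ge0.
    have : (fun t => \sum_s mu s * opt_value t s) @ \oo --> \sum_s mu s * sink_limit s.
      apply: cvg_big => // [|s _]; first exact: add_continuous.
      by apply: cvgMr; apply: opt_value_cvg.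
    by rewrite -cvg_shiftS.
  by move=> s _; apply: (v_inf_bounded (all_bounded s)).1.
have s0_ne : s0 != e by apply: contra_notN unb => /eqP ->; apply: bounded_state_sink.
rewrite (ERM_mu_Ny _ _ _ s0_ne (v_inf_unbounded unb).1) //; last exact: mu_ge0.
exact: limn_einf_cert_equiv_cvgy (opt_moment_cvgy unb s0_ne).
Qed.

Lemma ERM_v_inf_star_max : ERM_mu mu beta (v_inf_star p r beta) =
  \big[maxe/-oo%E]_(d' : {ffun st -> A}) ERM_mu mu beta (v_inf p r beta (sd_policy R d')).
Proof.
apply/eqP; rewrite eq_le; apply/andP; split.
  rewrite (@eq_ERM_mu _ _ mu beta _ (v_inf p r beta (sd_policy R d))) => [|s _].
    exact: (le_bigmax _ _ d).
  exact: v_inf_star_sd.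
apply: bigmax_le => [|d' _]; first exact: leNye.
by apply: le_ERM_mu => [//|s|s _]; [apply: mu_ge0 | apply: v_inf_le_star].
Qed.

End DominatedPolicy.

End BellmanOperators.

Theorem corollary2 (R : realType) (S : nat) (A : finType)
  (p r : state S -> A -> state S -> R) (mu : state S -> R) (beta : R) :
  0 < beta ->
  (0 < #|A|)%N ->
  (forall s a s', 0 <= p s a s') ->
  (forall s a, \sum_(s' : state S) p s a s' = 1) ->
  (forall a, p (sink S) a (sink S) = 1) ->
  (forall a, r (sink S) a (sink S) = 0) ->
  mu (sink S) = 0 ->
  (forall s, s != sink S -> 0 < mu s) ->
  \sum_(s : state S) mu s = 1 ->
  transient p ->
  exists pistar : {ffun state S -> A},
    (forall s, s != sink S ->
       v_inf_star p r beta s = v_inf p r beta (sd_policy R pistar) s) /\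
    g_inf_star p r mu beta = ERM_mu mu beta (v_inf_star p r beta) /\
    ERM_mu mu beta (v_inf_star p r beta) =
      \big[maxe/-oo%E]_(d : {ffun state S -> A})
         ERM_mu mu beta (v_inf p r beta (sd_policy R d)).
Proof.
move=> beta_gt0 /card_gt0P[a0 _] p_ge0 p_sum1 p_sink r_sink mu_sink mu_gt0 mu_sum1 p_tr.
have [d d_dom] := exists_dominated_policy a0 p_ge0 p_sum1 p_sink r_sink beta.
exists d; split=> [s _|].
  exact: (v_inf_star_sd p_ge0 p_sum1 p_sink r_sink beta_gt0 d_dom p_tr).
split.
  exact: (g_inf_star_ERM p_ge0 p_sum1 p_sink r_sink beta_gt0 mu_sink mu_gt0 mu_sum1 d_dom p_tr).
exact: (ERM_v_inf_star_max p_ge0 p_sum1 p_sink r_sink beta_gt0 mu_sink mu_gt0 d_dom p_tr).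
Qed.
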